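(* Let $p$ be a prime and $D$ an integer with $1 \le D \le p-1$. Let $k\ge1$, let $A_1,\dots,A_k\subseteq\mathbb{Z}_p$ be $D$-APs, and let $g_0,g_1\in\mathbb{Z}_p$. If $\mathrm{dist}_{p,D}(g_0,g_1) \ge \big|\sum_{i=1}^k A_i\big|$, then $g_0$ and $g_1$ are not both elements of $\sum_{i=1}^k A_i$.
   Context: $\mathbb{Z}_p=\{0,\dots,p-1\}$ under addition mod $p$. Sumset: $\sum_{i=1}^k A_i=\{a_1+\dots+a_k\bmod p : a_i\in A_i\}$. For $b\in\{0,\dots,D-1\}$, the $D$-AP with base $b$ is $A_{(b)}=\{b+iD : i\text{ integer},\ 0\le i\le\lfloor (p-1-b)/D\rfloor\}\subseteq\mathbb{Z}_p$; a $D$-AP is any set of this form. For $g_0,g_1\in\mathbb{Z}_p$, $\mathrm{dist}_{p,D}(g_0,g_1)=\min\{(g_1-g_0)D^{-1}\bmod p,\ (g_0-g_1)D^{-1}\bmod p\}$, with each term viewed as an integer in $\{0,\dots,p-1\}$ and $D^{-1}$ the inverse of $D$ mod $p$. *)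

From mathcomp Require Import all_boot.
Unset Printing Implicit Defensive.

Definition dap (p D b : nat) : {set 'I_p} :=
  [set x : 'I_p | [exists i : 'I_p.+1,
      (i <= (p - 1 - b) %/ D) && (nat_of_ord x == b + i * D)]].

Definition is_dap (p D : nat) (A : {set 'I_p}) : Prop :=
  exists2 b, b < D & A = dap p D b.

Definition sumset (p k : nat) (A : 'I_k -> {set 'I_p}) : {set 'I_p} :=
  [set x : 'I_p | [exists a : {ffun 'I_k -> 'I_p},
      [forall i, a i \in A i] && (nat_of_ord x == (\sum_(i < k) nat_of_ord (a i)) %% p)]].

Definition inv_mod (p D : nat) : nat :=
  if [pick d : 'I_p | (D * d) %% p == 1 %% p] is Some d then nat_of_ord d else 0.

Definition dist_pD (p D g0 g1 : nat) : nat :=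
  minn (((g1 + (p - g0)) * inv_mod p D) %% p) (((g0 + (p - g1)) * inv_mod p D) %% p).

(* Write the D-AP with base b_i as {b_i + t D : 0 <= t <= m_i}. A point of the
   sumset is then B + D J mod p with B = sum b_i and J = sum t_i, and since any
   J <= M = sum m_i splits as such a sum, the sumset is exactly the image of
   the integer interval [0, M] under J |-> B + D J mod p. If g0, g1 come from
   J0 <= J1, then (g1 - g0) D^{-1} = e mod p with e = J1 - J0, and the points
   for J0, J0 + 1, ..., J0 + (e mod p) are all in the sumset and pairwise
   distinct (D is invertible), so the sumset has more than dist(g0, g1)
   elements. *)

From mathcomp Require Import all_boot.
From mathcomp Require Import zify.

Set Implicit Arguments.
Unset Strict Implicit.

Lemma sum_decomposition n (m : 'I_n -> nat) J :
  J <= \sum_(i < n) m i ->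
  exists2 t : 'I_n -> nat, forall i, t i <= m i & \sum_(i < n) t i = J.
Proof.
elim: n m J => [|n IH] m J.
  by rewrite big_ord0 leqn0 => /eqP ->; exists (fun=> 0) => //; rewrite big_ord0.
rewrite big_ord_recl; set S' := \sum_(i < n) _ => J_le.
have [t' t'_le sum_t'] := IH (fun i => m (lift ord0 i)) (minn J S') (geq_minr _ _).
pose t i := if unlift ord0 i is Some j then t' j else J - minn J S'.
exists t.
  by move=> i; rewrite /t; case: unliftP => [j ->|->] //; lia.
by rewrite big_ord_recl /t unlift_none (eq_bigr t') => [|i _]; rewrite ?liftK // sum_t'; lia.
Qed.

Lemma mul_inv_mod p D : 1 < p -> coprime D p -> (D * inv_mod p D) %% p = 1.
Proof.
move=> p_gt1 coDp.
have D_gt0 : 0 < D by case: D coDp => //; rewrite /coprime gcd0n => /eqP; lia.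
have [[u v] /= uv] := coprimeP _ D_gt0 coDp.
rewrite /inv_mod; case: pickP => [d /eqP -> | no_inv]; first by rewrite modn_small.
have := no_inv (Ordinal (ltn_pmod u (ltnW p_gt1))).
rewrite /= modnMmr (_ : D * u = v * p + 1); first by rewrite modnMDl eqxx.
lia.
Qed.

Lemma mulnVK_mod p D u : (D * u) %% p = 1 -> forall e, D * e * u = e %[mod p].
Proof. by move=> Du e; rewrite mulnAC -modnMml Du mul1n. Qed.

Lemma ap_index_diff_mod p D u c x y e : (D * u) %% p = 1 -> x < p ->
  x = c %[mod p] -> y = c + D * e %[mod p] -> (y + (p - x)) * u = e %[mod p].
Proof.
move=> Du x_lt x_c y_c.
have diff_De : y + (p - x) = D * e %[mod p].
  have c_negx : (c + (p - x)) %% p = 0.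
    by rewrite -modnDml -x_c modnDml subnKC ?modnn // ltnW.
  by rewrite -modnDml y_c modnDml addnAC -modnDml c_negx.
by rewrite -modnMml diff_De modnMml mulnVK_mod.
Qed.

Lemma card_ap_mod_ge p D u c n (S : {set 'I_p}) : (D * u) %% p = 1 -> n <= p ->
  (forall x : 'I_p, (exists2 t, t < n & x = (c + D * t) %% p :> nat) -> x \in S) ->
  n <= #|S|.
Proof.
case: n => [|n] // Du n_lt S_ap.
have p_gt0 : 0 < p := leq_trans (ltn0Sn n) n_lt.
pose s (t : 'I_n.+1) : 'I_p := Ordinal (ltn_pmod (c + D * t) p_gt0).
have s_inj : injective s.
  move=> t1 t2 /(congr1 val) /eqP /=; rewrite eqn_modDl => /eqP Dt12; apply: val_inj.
  rewrite /= -(modn_small (leq_trans (ltn_ord t1) n_lt)).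
  rewrite -(modn_small (leq_trans (ltn_ord t2) n_lt)).
  by rewrite -(mulnVK_mod Du t1) -modnMml Dt12 modnMml mulnVK_mod.
have : s @: [set: 'I_n.+1] \subset S.
  by apply/subsetP => _ /imsetP[t _ ->]; apply: S_ap; exists t.
by move/subset_leq_card; rewrite card_imset // cardsT card_ord.
Qed.

Lemma dapP p D b (x : 'I_p) :
  reflect (exists2 t, t <= (p - 1 - b) %/ D & x = b + t * D :> nat) (x \in dap p D b).
Proof.
rewrite inE; apply: (iffP existsP) => [[i /andP[i_le /eqP ->]] | [t t_le x_eq]].
  by exists i.
have t_lt : t < p.+1 by have := leq_div (p - 1 - b) D; lia.
by exists (Ordinal t_lt); rewrite t_le x_eq eqxx.
Qed.

Lemma dap_point_lt p D b t : b < p -> t <= (p - 1 - b) %/ D -> b + t * D < p.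
Proof.
move=> b_lt t_le; have := leq_mul t_le (leqnn D); have := leq_divM (p - 1 - b) D; lia.
Qed.

Section SumsetOfDAPs.

Variables (p D k : nat) (A : 'I_k -> {set 'I_p}) (b : 'I_k -> nat).
Hypotheses (b_lt : forall i, b i < p) (A_dap : forall i, A i = dap p D (b i)).

Local Notation S := (sumset p k A).
Local Notation B := (\sum_(i < k) b i).
Local Notation M := (\sum_(i < k) (p - 1 - b i) %/ D).

Lemma sumset_dapP (x : 'I_p) :
  reflect (exists2 J, J <= M & x = (B + D * J) %% p :> nat) (x \in S).
Proof.
rewrite inE; apply: (iffP existsP) => [[a /andP[/forallP a_in /eqP ->]] | [J J_le ->]].
  have /fin_all_exists[t t_spec] : forall i, exists t,
      t <= (p - 1 - b i) %/ D /\ nat_of_ord (a i) = b i + t * D.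
    move=> i; have /dapP[t ? ?] : a i \in dap p D (b i) by rewrite -A_dap.
    by exists t.
  exists (\sum_(i < k) t i); first by apply: leq_sum => i _; case: (t_spec i).
  by rewrite (eq_bigr _ (fun i _ => (t_spec i).2)) big_split /= -big_distrl mulnC.
have [t t_le sum_t] := sum_decomposition J_le.
pose a := [ffun i => Ordinal (dap_point_lt (b_lt i) (t_le i))].
exists a; apply/andP; split.
  by apply/forallP => i; rewrite A_dap /a ffunE; apply/dapP; exists (t i).
rewrite eq_sym; apply/eqP; congr (_ %% p).
under eq_bigr do rewrite /a ffunE /=.
by rewrite big_split /= -big_distrl sum_t mulnC.
Qed.

Lemma sumset_dap_gap_lt u (x y : 'I_p) Jx Jy : (D * u) %% p = 1 ->
  Jx <= Jy -> Jy <= M ->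
  x = (B + D * Jx) %% p :> nat -> y = (B + D * Jy) %% p :> nat ->
  ((y + (p - x)) * u) %% p < #|S|.
Proof.
move=> Du Jxy Jy_le x_eq y_eq; set e := Jy - Jx.
have Jy_e : Jy = Jx + e by rewrite subnKC.
have -> : ((y + (p - x)) * u) %% p = e %% p.
  apply: (ap_index_diff_mod (c := B + D * Jx) Du (ltn_ord x)).
    by rewrite x_eq modn_mod.
  by rewrite y_eq modn_mod Jy_e mulnDr addnA.
have p_gt0 : 0 < p := leq_ltn_trans (leq0n x) (ltn_ord x).
apply: (card_ap_mod_ge (c := B + D * Jx) Du (ltn_pmod e p_gt0)) => z [t t_lt z_eq].
apply/sumset_dapP; exists (Jx + t); last by rewrite z_eq mulnDr addnA.
by have := leq_mod e p; lia.
Qed.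

Lemma sumset_dap_dist_lt u (x y : 'I_p) : (D * u) %% p = 1 ->
  x \in S -> y \in S ->
  minn (((y + (p - x)) * u) %% p) (((x + (p - y)) * u) %% p) < #|S|.
Proof.
move=> Du /sumset_dapP[Jx Jx_le x_eq] /sumset_dapP[Jy Jy_le y_eq].
have [Jxy | Jyx] := leqP Jx Jy.
  exact: leq_ltn_trans (geq_minl _ _) (sumset_dap_gap_lt Du Jxy Jy_le x_eq y_eq).
exact: leq_ltn_trans (geq_minr _ _) (sumset_dap_gap_lt Du (ltnW Jyx) Jx_le y_eq x_eq).
Qed.

End SumsetOfDAPs.

Theorem corollary2p7 (p D k : nat) (A : 'I_k -> {set 'I_p}) (g0 g1 : 'I_p) :
  prime p -> 1 <= D <= p - 1 -> 1 <= k ->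
  (forall i, is_dap p D (A i)) ->
  #|sumset p k A| <= dist_pD p D g0 g1 ->
  ~ (g0 \in sumset p k A /\ g1 \in sumset p k A).
Proof.
move=> p_prime D_range _ A_dap card_le [g0_in g1_in].
have /fin_all_exists[b b_spec] : forall i, exists b, b < D /\ A i = dap p D b.
  by move=> i; have [bi ? ?] := A_dap i; exists bi.
have b_lt i : b i < p by have := (b_spec i).1; lia.
have Du : (D * inv_mod p D) %% p = 1.
  apply: mul_inv_mod (prime_gt1 p_prime) _.
  by rewrite coprime_sym prime_coprime // gtnNdvd //; lia.
have := sumset_dap_dist_lt b_lt (fun i => (b_spec i).2) Du g0_in g1_in.
by rewrite ltnNge card_le.
Qed.
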